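(* Let $t_0>0$. A tame power series $\alpha$ is uniquely determined by the sequence of values $B_\alpha[n;t_0]$, $n\ge0$: if $\alpha,\alpha'$ are tame power series with $B_\alpha[n;t_0]=B_{\alpha'}[n;t_0]$ for all $n\ge0$, then $\alpha=\alpha'$.
   Context: A power series $\alpha(z)=\sum_{n\ge0}a_{n+1}z^n$ is tame if it converges on the open unit disk, extends holomorphically to a punctured neighborhood of $z=1$ with a pole of order $\nu\ge0$ at $1$ ($\nu=0$ meaning holomorphic at $1$), and $(z-1)^\nu\alpha(z)$ equals, on an open neighborhood of $(0,1]$, a multi-power series $\sum_{\mathbf i\in\mathbb Z^N_{\ge0}}c_{\mathbf i}\prod_{j=1}^N(z^{e_j}-1)^{i_j}$ (some $N\ge1$, $e_j\in\mathbb Z_{>0}$) converging absolutely and uniformly there. Bernoulli polynomials of a tame $\alpha$ with pole order $\nu$ (each series uses its own $\nu$): $\sum_{n\ge0}B_\alpha[n;t]\frac{u^n}{n!}=(-u)^\nu\alpha(e^u)e^{tu}$ near $u=0$. *)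

From Stdlib Require Import Reals List Arith Factorial.
Import ListNotations.
Open Scope R_scope.

Record Cx := mkC { re : R ; im : R }.

Definition RtoC (x : R) : Cx := mkC x 0.
Definition C0 : Cx := RtoC 0.
Definition C1 : Cx := RtoC 1.
Definition Cadd (z w : Cx) : Cx := mkC (re z + re w) (im z + im w).
Definition Copp (z : Cx) : Cx := mkC (- re z) (- im z).
Definition Csub (z w : Cx) : Cx := Cadd z (Copp w).
Definition Cmul (z w : Cx) : Cx :=
  mkC (re z * re w - im z * im w) (re z * im w + im z * re w).
Definition Cinv (z : Cx) : Cx :=
  mkC (re z / (re z ^ 2 + im z ^ 2)) (- im z / (re z ^ 2 + im z ^ 2)).
Definition Cdiv (z w : Cx) : Cx := Cmul z (Cinv w).
Definition Cnorm (z : Cx) : R := sqrt (re z ^ 2 + im z ^ 2).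
Fixpoint Cpow (z : Cx) (n : nat) : Cx :=
  match n with O => C1 | S k => Cmul z (Cpow z k) end.
Definition Cexp (z : Cx) : Cx :=
  mkC (exp (re z) * cos (im z)) (exp (re z) * sin (im z)).

Definition Cset := Cx -> Prop.

Definition Copen (S : Cset) : Prop :=
  forall z, S z -> exists d, d > 0 /\ forall w, Cnorm (Csub w z) < d -> S w.

Definition Cdiff_at (f : Cx -> Cx) (z : Cx) : Prop :=
  exists L : Cx, forall eps, eps > 0 -> exists d, d > 0 /\
    forall h, h <> C0 -> Cnorm h < d ->
      Cnorm (Csub (Cdiv (Csub (f (Cadd z h)) (f z)) h) L) < eps.

Definition holo_on (f : Cx -> Cx) (S : Cset) : Prop :=
  Copen S /\ forall z, S z -> Cdiff_at f z.

Definition Cseq_cv (s : nat -> Cx) (l : Cx) : Prop :=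
  forall eps, eps > 0 -> exists N, forall n, (n >= N)%nat -> Cnorm (Csub (s n) l) < eps.

Fixpoint psum (f : nat -> Cx) (n : nat) : Cx :=
  match n with O => C0 | S k => Cadd (psum f k) (f k) end.

Definition series_cv (f : nat -> Cx) (l : Cx) : Prop := Cseq_cv (psum f) l.

Definition unit_disk : Cset := fun z => Cnorm z < 1.
Definition disk (c : Cx) (r : R) : Cset := fun z => Cnorm (Csub z c) < r.
Definition punct_disk (c : Cx) (r : R) : Cset :=
  fun z => z <> c /\ Cnorm (Csub z c) < r.

(** a multi-index for N variables is a list of naturals of length N *)
Definition mterm (N : nat) (e : nat -> nat) (c : list nat -> Cx) (z : Cx)
    (i : list nat) : Cx :=
  Cmul (c i)
    (fold_right Cmul C1
       (map (fun j => Cpow (Csub (Cpow z (e j)) C1) (nth j i O)) (seq 0 N))).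

Definition valid_indices (N : nat) (G : list (list nat)) : Prop :=
  NoDup G /\ forall i, In i G -> length i = N.

Definition Csum_list (l : list Cx) : Cx := fold_right Cadd C0 l.
Definition Rsum_list (l : list R) : R := fold_right Rplus 0 l.

(** On U, the multi-power series sum_{i in N^N} c_i prod_j (z^{e_j}-1)^{i_j}
    converges absolutely and uniformly (as an unordered sum over N^N),
    with sum v z. *)
Definition multi_series_abs_unif (N : nat) (e : nat -> nat) (c : list nat -> Cx)
    (U : Cset) (v : Cx -> Cx) : Prop :=
  (forall eps, eps > 0 -> exists F0, valid_indices N F0 /\
     forall z, U z -> forall G, valid_indices N G -> incl F0 G ->
       Cnorm (Csub (Csum_list (map (mterm N e c z) G)) (v z)) < eps) /\
  (* uniform absolute convergence: uniformly small tails of sum of |terms| *)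
  (forall eps, eps > 0 -> exists F0, valid_indices N F0 /\
     forall z, U z -> forall G, valid_indices N G ->
       (forall i, In i G -> ~ In i F0) ->
       Rsum_list (map (fun i => Cnorm (mterm N e c z i)) G) < eps).

(** alpha(z) = sum_n a n z^n  (here a n stands for the paper's a_{n+1}).
    [tame_ext a F g r nu]: the series converges on the unit disk to F, F is
    holomorphic on (unit disk) ∪ (punctured disk around 1 of radius r), and
    (z-1)^nu F(z) extends holomorphically (as g) to the full disk around 1;
    nu = 0 means holomorphic at 1, nu > 0 means a pole of exact order nu
    (g 1 <> 0). *)
Definition tame_ext (a : nat -> Cx) (F g : Cx -> Cx) (r : R) (nu : nat) : Prop :=
  r > 0 /\
  (forall z, unit_disk z -> series_cv (fun n => Cmul (a n) (Cpow z n)) (F z)) /\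
  holo_on F (fun z => unit_disk z \/ punct_disk C1 r z) /\
  holo_on g (disk C1 r) /\
  (forall z, punct_disk C1 r z -> g z = Cmul (Cpow (Csub z C1) nu) (F z)) /\
  (nu = O \/ g C1 <> C0).

Definition reg_fun (F g : Cx -> Cx) (nu : nat) (z : Cx) : Cx :=
  Cmul (Cpow (Csub z C1) nu) (F z).

Definition tame (a : nat -> Cx) : Prop :=
  exists F g r nu, tame_ext a F g r nu /\
  exists (N : nat) (e : nat -> nat) (c : list nat -> Cx) (U : Cset),
    (N >= 1)%nat /\
    (forall j, (j < N)%nat -> (e j > 0)%nat) /\
    Copen U /\
    (forall x, 0 < x <= 1 -> U (RtoC x)) /\
    (forall z, U z -> unit_disk z \/ disk C1 r z) /\
    multi_series_abs_unif N e c U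
      (fun z => if Req_EM_T (re z) 1 then
                  if Req_EM_T (im z) 0 then g C1 else reg_fun F g nu z
                else reg_fun F g nu z).

(** [bernoulli a t b]: b n = B_alpha[n; t], i.e.
    sum_n b n u^n / n! = (-u)^nu alpha(e^u) e^{t u} for u near 0 (u <> 0,
    the value at u = 0 being the removable-singularity value). *)
Definition bernoulli (a : nat -> Cx) (t : R) (b : nat -> Cx) : Prop :=
  exists F g r nu, tame_ext a F g r nu /\
  exists rho, rho > 0 /\
    forall u, u <> C0 -> Cnorm u < rho ->
      series_cv (fun n => Cmul (Cdiv (b n) (RtoC (INR (fact n)))) (Cpow u n))
        (Cmul (Cmul (Cpow (Copp u) nu) (F (Cexp u))) (Cexp (Cmul (RtoC t) u))).

(* For real u < 0 near 0 the Bernoulli generating function is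
   (-u)^nu alpha(e^u) e^(t0 u), so equal Bernoulli numbers give
   (-ln x)^nu alpha(x) = (-ln x)^nu' alpha'(x) for x < 1 close to 1; the real and
   imaginary parts of alpha and alpha' are real power series of radius >= 1.
   If nu = nu', the identity theorem for such series gives alpha = alpha'.
   Otherwise P = (-ln x)^k Q with k >= 1; eliminating ln with the Euler operator
   theta = x d/dx yields the power-series identity
   (Q theta P - P theta Q)^k = (-k)^k P^(k-1) Q^(k+1), and comparing lowest-order
   coefficients forces Q = 0, hence P = 0. *)

From Pilot Require Import Defs.
From Coquelicot Require Import Coquelicot.
From Stdlib Require Import Reals Lra Lia Factorial Classical FunctionalExtensionality.
(* Re-import so that [RtoC] and friends denote the complex numbers of Defs,
   not those of Coquelicot. *)
Import Defs.
Open Scope R_scope.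

(** * Power series of radius at least 1 *)

Lemma scal_R (u v : R) : scal u v = u * v.
Proof. reflexivity. Qed.

Definition unit_radius (a : nat -> R) : Prop := Rbar_le 1 (CV_radius a).

Lemma unit_radius_lt a x : unit_radius a -> Rabs x < 1 -> Rbar_lt (Rabs x) (CV_radius a).
Proof. unfold unit_radius; intros H Hx; destruct (CV_radius a); simpl in *; lra. Qed.

Lemma ex_pseries_R a x : ex_pseries a x <-> ex_series (fun k => a k * x ^ k).
Proof.
  unfold ex_pseries; split; apply ex_series_ext; intro k;
    [| symmetry]; rewrite scal_R, pow_n_pow; apply Rmult_comm.
Qed.

Lemma unit_radius_intro a : (forall x, 0 <= x < 1 -> ex_pseries a x) -> unit_radius a.
Proof.
  intro H; unfold unit_radius.
  destruct (Rbar_le_lt_dec 1 (CV_radius a)) as [h|h]; auto; exfalso.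
  generalize (CV_radius_ge_0 a); intro h0.
  destruct (CV_radius a) as [r| |] eqn:E; simpl in h, h0; try contradiction.
  apply (CV_disk_outside a ((r + 1) / 2)).
  - rewrite E; simpl; rewrite Rabs_pos_eq; lra.
  - apply ex_series_lim_0, ex_pseries_R, H; lra.
Qed.

Lemma unit_radius_ex_pseries a x : unit_radius a -> 0 <= x < 1 -> ex_pseries a x.
Proof. intros; apply CV_radius_inside, unit_radius_lt; auto; rewrite Rabs_pos_eq; lra. Qed.

Lemma unit_radius_plus a b : unit_radius a -> unit_radius b -> unit_radius (PS_plus a b).
Proof.
  intros; apply unit_radius_intro; intros.
  apply ex_pseries_plus; apply unit_radius_ex_pseries; auto.
Qed.

Lemma unit_radius_opp a : unit_radius a -> unit_radius (PS_opp a).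
Proof. unfold unit_radius; rewrite CV_radius_opp; auto. Qed.

Lemma unit_radius_scal c a : unit_radius a -> unit_radius (PS_scal c a).
Proof.
  intros; apply unit_radius_intro; intros.
  apply ex_pseries_scal; [apply Rmult_comm | apply unit_radius_ex_pseries; auto].
Qed.

Lemma unit_radius_mult a b : unit_radius a -> unit_radius b -> unit_radius (PS_mult a b).
Proof.
  intros; apply unit_radius_intro; intros.
  apply ex_pseries_mult; apply unit_radius_lt; auto; rewrite Rabs_pos_eq; lra.
Qed.

Definition PS_reflect (a : nat -> R) (n : nat) : R := (-1) ^ n * a n.

Lemma PS_reflect_term a k x : PS_reflect a k * x ^ k = a k * (- x) ^ k.
Proof.
  unfold PS_reflect; replace (- x) with ((-1) * x) by ring.
  rewrite Rpow_mult_distr; ring.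
Qed.

Lemma PSeries_reflect a x : PSeries (PS_reflect a) x = PSeries a (- x).
Proof.
  unfold PSeries; apply Series_ext; intro k; apply PS_reflect_term.
Qed.

Lemma unit_radius_reflect a : unit_radius a -> unit_radius (PS_reflect a).
Proof.
  intro H; apply unit_radius_intro; intros x Hx.
  apply ex_pseries_R.
  assert (Hopp : ex_pseries a (- x))
    by (apply CV_radius_inside, unit_radius_lt; auto; rewrite Rabs_Ropp, Rabs_pos_eq; lra).
  apply ex_pseries_R in Hopp; revert Hopp.
  apply ex_series_ext; intro k; symmetry; apply PS_reflect_term.
Qed.

(** * The identity theorem *)

Lemma continuity_pt_zero_left g e : continuity_pt g e ->
  (exists d, d > 0 /\ forall t, e - d < t < e -> g t = 0) -> g e = 0.
Proof.
  intros Hc [d [Hd Hz]].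
  destruct (Req_dec (g e) 0) as [h|h]; auto; exfalso.
  apply Rabs_pos_lt in h.
  destruct (Hc (Rabs (g e) / 2)) as [alp [Ha Hnear]]; [lra|].
  assert (Hm : 0 < Rmin alp d) by (apply Rmin_glb_lt; lra).
  set (t := e - Rmin alp d / 2).
  assert (Ht : Rabs (g t - g e) < Rabs (g e) / 2).
  { apply Hnear; split; [split; [exact I | unfold t; lra]|].
    simpl; unfold R_dist, t.
    assert (Hm1 := Rmin_l alp d).
    rewrite Rabs_left; lra. }
  rewrite Hz in Ht by (assert (Hm2 := Rmin_r alp d); unfold t; lra).
  rewrite Rminus_0_l, Rabs_Ropp in Ht; lra.
Qed.

Lemma Derive_n_PSeries_zero_left b e : unit_radius b -> -1 < e < 1 ->
  (forall t, -1 < t < e -> PSeries b t = 0) ->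
  forall m, Derive_n (PSeries b) m e = 0.
Proof.
  intros Hb He Hz m.
  assert (Hin : forall t, -1 < t <= e -> Rbar_lt (Rabs t) (CV_radius b))
    by (intros t Ht; apply unit_radius_lt; auto; apply Rabs_def1; lra).
  rewrite Derive_n_PSeries by (apply Hin; lra).
  apply continuity_pt_zero_left.
  { apply PSeries_continuity; rewrite CV_radius_derive_n; apply Hin; lra. }
  exists (1 + e); split; [lra|]; intros t Ht.
  rewrite <- Derive_n_PSeries by (apply Hin; lra).
  destruct m as [|m]; [apply Hz; lra|].
  rewrite (Derive_n_ext_loc _ (fun _ => 0)) by
    (apply (locally_interval _ t (-1) e); simpl; try lra;
     intros y Hy1 Hy2; apply Hz; lra).
  apply Derive_n_const.
Qed.

Lemma sum_f_R0_ge_term f n i : (forall k, 0 <= f k) -> (i <= n)%nat -> f i <= sum_f_R0 f n.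
Proof.
  intros Hf; induction n; intro Hi.
  - replace i with 0%nat by lia; simpl; lra.
  - simpl; destruct (Nat.eq_dec i (S n)) as [->|h].
    + assert (0 <= sum_f_R0 f n) by (apply cond_pos_sum; auto); lra.
    + assert (f i <= sum_f_R0 f n) by (apply IHn; lia).
      specialize (Hf (S n)); lra.
Qed.

(* One term of the binomial expansion of (c + d)^(k + m). *)
Lemma fact_div_mult_pow_le k m c d : 0 <= c -> 0 <= d ->
  INR (fact (k + m)) / INR (fact k) * c ^ k * d ^ m <= INR (fact m) * (c + d) ^ (k + m).
Proof.
  intros Hc Hd.
  assert (HC : C (k + m) m * INR (fact m) = INR (fact (k + m)) / INR (fact k)).
  { unfold C; replace (k + m - m)%nat with k by lia.
    field; split; apply INR_fact_neq_0. }
  assert (Hterm : C (k + m) m * d ^ m * c ^ k <= (d + c) ^ (k + m)).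
  { rewrite binomial.
    assert (Hle := sum_f_R0_ge_term (fun i => C (k + m) i * d ^ i * c ^ (k + m - i)) (k + m) m).
    simpl in Hle; replace (k + m - m)%nat with k in Hle by lia.
    apply Hle; [|lia]; intro i.
    apply Rmult_le_pos; [apply Rmult_le_pos|]; try (apply pow_le; auto).
    unfold C; apply Rlt_le, Rdiv_lt_0_compat;
      [|apply Rmult_lt_0_compat]; apply INR_fact_lt_0. }
  rewrite <- HC, (Rplus_comm c d).
  assert (Hf := INR_fact_lt_0 m).
  replace (C (k + m) m * INR (fact m) * c ^ k * d ^ m)
    with (INR (fact m) * (C (k + m) m * d ^ m * c ^ k)) by ring.
  apply Rmult_le_compat_l; lra.
Qed.

Lemma PS_derive_n_term_le b m k c d z : 0 <= c -> 0 < d -> Rabs z <= c ->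
  Rabs (PS_derive_n m b k * z ^ k)
  <= INR (fact m) / d ^ m * (Rabs (b (m + k)%nat) * (c + d) ^ (m + k)).
Proof.
  intros Hc Hd Hz.
  assert (Hdm : 0 < d ^ m) by (apply pow_lt; auto).
  assert (Hq : 0 <= INR (fact (k + m)) / INR (fact k))
    by (apply Rlt_le, Rdiv_lt_0_compat; apply INR_fact_lt_0).
  assert (Hzk : Rabs z ^ k <= c ^ k) by (apply pow_incr; split; [apply Rabs_pos | auto]).
  assert (Hb := Rabs_pos (b (k + m)%nat)).
  assert (Hf := fact_div_mult_pow_le k m c d Hc (Rlt_le _ _ Hd)).
  unfold PS_derive_n; rewrite !Rabs_mult, <- RPow_abs, (Rabs_pos_eq _ Hq).
  replace (m + k)%nat with (k + m)%nat by lia.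
  apply Rmult_le_reg_r with (d ^ m); auto.
  replace (INR (fact m) / d ^ m * (Rabs (b (k + m)%nat) * (c + d) ^ (k + m)) * d ^ m)
    with (Rabs (b (k + m)%nat) * (INR (fact m) * (c + d) ^ (k + m))) by (field; lra).
  apply Rle_trans with
    (Rabs (b (k + m)%nat) * (INR (fact (k + m)) / INR (fact k) * c ^ k * d ^ m)).
  - replace (INR (fact (k + m)) / INR (fact k) * Rabs (b (k + m)%nat) * Rabs z ^ k * d ^ m)
      with (Rabs (b (k + m)%nat) * (INR (fact (k + m)) / INR (fact k) * Rabs z ^ k * d ^ m))
      by ring.
    apply Rmult_le_compat_l; auto.
    apply Rmult_le_compat_r; [lra|]. apply Rmult_le_compat_l; auto.
  - apply Rmult_le_compat_l; auto.
Qed.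

Lemma Series_shift_le a n : (forall k, 0 <= a k) -> ex_series a ->
  Series (fun k => a (n + k)%nat) <= Series a.
Proof.
  intros Ha Hex; destruct n as [|n].
  - apply Req_le, Series_ext; reflexivity.
  - rewrite (Series_incr_n a (S n)) by (auto; lia).
    assert (0 <= sum_f_R0 a (Init.Nat.pred (S n))) by (apply cond_pos_sum; auto).
    lra.
Qed.

Lemma Derive_n_PSeries_bound b c d : unit_radius b -> 0 <= c -> 0 < d -> c + d < 1 ->
  forall m z, Rabs z <= c ->
  Rabs (Derive_n (PSeries b) m z)
  <= INR (fact m) / d ^ m * Series (fun n => Rabs (b n) * (c + d) ^ n).
Proof.
  intros Hb Hc Hd Hcd m z Hz.
  assert (Hs : Rabs (c + d) < 1) by (rewrite Rabs_pos_eq; lra).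
  assert (Hex : ex_series (fun n => Rabs (b n) * (c + d) ^ n)).
  { generalize (CV_disk_inside b _ (unit_radius_lt b _ Hb Hs)); apply ex_series_ext.
    intro n; rewrite Rabs_mult, <- RPow_abs, (Rabs_pos_eq (c + d)) by lra; reflexivity. }
  assert (Hzr : Rbar_lt (Rabs z) (CV_radius b)) by (apply unit_radius_lt; auto; lra).
  rewrite Derive_n_PSeries by auto; unfold PSeries.
  eapply Rle_trans; [apply Series_Rabs|].
  { apply CV_disk_inside; rewrite CV_radius_derive_n; auto. }
  eapply Rle_trans.
  - apply Series_le with
      (b := fun k => INR (fact m) / d ^ m * (Rabs (b (m + k)%nat) * (c + d) ^ (m + k))).
    + intro k; split; [apply Rabs_pos | apply PS_derive_n_term_le; auto].
    + assert (Htail := proj1 (ex_series_incr_n _ m) Hex).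
      generalize (ex_series_scal_l (INR (fact m) / d ^ m) _ Htail).
      apply ex_series_ext; intro k; apply scal_R.
  - rewrite Series_scal_l; apply Rmult_le_compat_l.
    + apply Rlt_le, Rdiv_lt_0_compat; [apply INR_fact_lt_0 | apply pow_lt; auto].
    + apply (Series_shift_le (fun n => Rabs (b n) * (c + d) ^ n)); auto.
      intro; apply Rmult_le_pos; [apply Rabs_pos | apply pow_le; lra].
Qed.

Lemma geometric_bound_eq0 x K q : 0 <= q < 1 ->
  (forall n, Rabs x <= K * q ^ S n) -> x = 0.
Proof.
  intros Hq Hx.
  destruct (Req_dec x 0) as [h|h]; auto; exfalso.
  apply Rabs_pos_lt in h.
  assert (HK : 0 < Rabs K + 1) by (generalize (Rabs_pos K); lra).
  destruct (pow_lt_1_zero q ltac:(rewrite Rabs_pos_eq; lra) (Rabs x / (Rabs K + 1)))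
    as [N HN]; [apply Rdiv_lt_0_compat; lra|].
  specialize (HN (S N) ltac:(lia)); specialize (Hx N).
  rewrite Rabs_pos_eq in HN by (apply pow_le; lra).
  assert (Hp : 0 <= q ^ S N) by (apply pow_le; lra).
  assert (HKq : K * q ^ S N <= Rabs K * q ^ S N)
    by (apply Rmult_le_compat_r; [lra | apply Rle_abs]).
  assert (Rabs K * q ^ S N <= Rabs K * (Rabs x / (Rabs K + 1)))
    by (apply Rmult_le_compat_l; [apply Rabs_pos | lra]).
  assert (Rabs K * (Rabs x / (Rabs K + 1)) < Rabs x).
  { apply Rmult_lt_reg_r with (Rabs K + 1); auto.
    replace (Rabs K * (Rabs x / (Rabs K + 1)) * (Rabs K + 1)) with (Rabs K * Rabs x)
      by (field; lra).
    nra. }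
  lra.
Qed.

(* All derivatives vanish at e, so the Taylor polynomial at e is 0 and the Lagrange
   remainder at t is at most K ((t - e) / d)^(n+1) by the Cauchy-type estimate. *)
Lemma PSeries_zero_extend b c e : unit_radius b -> 0 <= c < 1 -> -c <= e <= 0 ->
  (forall t, -1 < t < e -> PSeries b t = 0) ->
  forall t, e <= t <= 0 -> t < e + (1 - c) / 4 -> PSeries b t = 0.
Proof.
  intros Hb Hc He Hz t Ht Hte.
  assert (He' : -1 < e < 1) by lra.
  destruct (Req_dec t e) as [->|Hne].
  { exact (Derive_n_PSeries_zero_left b e Hb He' Hz 0). }
  set (d := (1 - c) / 2).
  set (q := (t - e) / d).
  assert (Hd : 0 < d) by (unfold d; lra).
  apply (geometric_bound_eq0 _ (Series (fun n => Rabs (b n) * (c + d) ^ n)) q).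
  { unfold q; split; [apply Rdiv_le_0_compat; lra|].
    apply Rmult_lt_reg_r with d; auto; unfold Rdiv.
    rewrite Rmult_assoc, Rinv_l by lra; unfold d; lra. }
  intro n.
  destruct (Taylor_Lagrange (PSeries b) n e t ltac:(lra)) as [z [Hz1 Hz2]].
  { intros u Hu k _; apply ex_derive_n_PSeries, unit_radius_lt; auto.
    apply Rabs_def1; lra. }
  rewrite Hz2, sum_eq_R0, Rplus_0_l.
  2: { intros k _; rewrite (Derive_n_PSeries_zero_left b e Hb He' Hz k); ring. }
  assert (Hf : 0 < INR (fact (S n))) by apply INR_fact_lt_0.
  assert (Hr : 0 <= (t - e) ^ S n / INR (fact (S n)))
    by (apply Rdiv_le_0_compat; [apply pow_le; lra | auto]).
  rewrite Rabs_mult, (Rabs_pos_eq _ Hr).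
  eapply Rle_trans.
  { apply Rmult_le_compat_l; [exact Hr|].
    apply (Derive_n_PSeries_bound b c d Hb); [lra | lra | unfold d; lra |].
    apply Rabs_le; lra. }
  apply Req_le; unfold q, Rdiv; rewrite Rpow_mult_distr, pow_inv.
  field; split; [apply pow_nonzero|]; lra.
Qed.

Lemma PSeries_zero_left_coef b c : unit_radius b -> 0 <= c < 1 ->
  (forall t, -1 < t < - c -> PSeries b t = 0) -> forall n, b n = 0.
Proof.
  intros Hb Hc Hz.
  set (h := (1 - c) / 4).
  assert (Hh : 0 < h) by (unfold h; lra).
  assert (Hreach : forall n t, -1 < t <= 0 -> t < - c + INR n * h -> PSeries b t = 0).
  { induction n as [|n IH]; intros t Ht Htn.
    - apply Hz; simpl in Htn; lra.
    - set (e := Rmin 0 (- c + INR n * h)).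
      assert (Hn := pos_INR n).
      assert (He : - c <= e <= 0).
      { unfold e; split; [apply Rmin_glb; nra | apply Rmin_l]. }
      destruct (Rlt_le_dec t e) as [Hlt|Hge].
      + apply IH; unfold e in Hlt;
          [generalize (Rmin_l 0 (- c + INR n * h)) | generalize (Rmin_r 0 (- c + INR n * h))];
          lra.
      + apply (PSeries_zero_extend b c e Hb Hc He); try lra.
        * intros u Hu; apply IH; unfold e in Hu;
            [generalize (Rmin_l 0 (- c + INR n * h)) | generalize (Rmin_r 0 (- c + INR n * h))];
            lra.
        * rewrite S_INR in Htn; fold h; unfold e, Rmin.
          destruct (Rle_dec 0 (- c + INR n * h)); lra. }
  destruct (INR_unbounded (c / h)) as [N HN].
  assert (HNh : c < INR N * h).
  { apply Rmult_gt_compat_r with (r := h) in HN; auto.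
    replace (c / h * h) with c in HN by (field; lra); lra. }
  intro n.
  assert (H0 := Derive_n_PSeries_zero_left b 0 Hb ltac:(lra)
                  (fun t Ht => Hreach N t ltac:(lra) ltac:(lra)) n).
  rewrite Derive_n_coef in H0
    by (unfold unit_radius in Hb; destruct (CV_radius b); simpl in *; lra).
  apply Rmult_integral in H0; destruct H0 as [H0|H0]; auto.
  exfalso; apply (INR_fact_neq_0 n); auto.
Qed.

Lemma PSeries_zero_near_1_coef a x1 : unit_radius a -> 0 <= x1 < 1 ->
  (forall x, x1 < x < 1 -> PSeries a x = 0) -> forall n, a n = 0.
Proof.
  intros Ha Hx Hz n.
  assert (Hr : PS_reflect a n = 0).
  { apply (PSeries_zero_left_coef _ x1 (unit_radius_reflect a Ha) Hx).
    intros t Ht; rewrite PSeries_reflect; apply Hz; lra. }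
  unfold PS_reflect in Hr; apply Rmult_integral in Hr; destruct Hr as [Hr|Hr]; auto.
  exfalso; apply (pow_nonzero (-1) n); auto; lra.
Qed.

Lemma PSeries_coef_eq_near_1 a b x1 : unit_radius a -> unit_radius b -> 0 <= x1 < 1 ->
  (forall x, x1 < x < 1 -> PSeries a x = PSeries b x) -> forall n, a n = b n.
Proof.
  intros Ha Hb Hx Heq n.
  assert (Hb' := unit_radius_opp b Hb).
  enough (Hd : PS_plus a (PS_opp b) n = 0) by (revert Hd; unfold PS_plus, PS_opp, plus, opp; simpl; lra).
  apply (PSeries_zero_near_1_coef _ x1 (unit_radius_plus _ _ Ha Hb') Hx).
  intros x Hx'.
  rewrite PSeries_plus, PSeries_opp by (apply unit_radius_ex_pseries; auto; lra).
  rewrite Heq by auto; ring.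
Qed.

(** * Lowest-order coefficients *)

Definition vanishes_below (a : nat -> R) (i : nat) : Prop := forall n, (n < i)%nat -> a n = 0.

Lemma exists_lowest_nonzero (a : nat -> R) n : a n <> 0 ->
  exists i, a i <> 0 /\ vanishes_below a i.
Proof.
  induction n as [n IH] using (well_founded_induction Wf_nat.lt_wf); intro Hn.
  destruct (classic (exists k, (k < n)%nat /\ a k <> 0)) as [[k [Hk Hak]]|Hno].
  - exact (IH k Hk Hak).
  - exists n; split; auto; intros k Hk.
    apply NNPP; intro Hak; apply Hno; eauto.
Qed.

Lemma sum_f_R0_single f n i : (i <= n)%nat ->
  (forall k, (k <= n)%nat -> k <> i -> f k = 0) -> sum_f_R0 f n = f i.
Proof.
  intros Hi Hf; induction n.
  - replace i with 0%nat by lia; reflexivity.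
  - simpl; destruct (Nat.eq_dec i (S n)) as [->|h].
    + rewrite sum_eq_R0; [ring|]; intros k Hk; apply Hf; lia.
    + rewrite IHn, (Hf (S n)) by (try intros; try apply Hf; lia); ring.
Qed.

Lemma PS_mult_vanishes_below a b i j : vanishes_below a i -> vanishes_below b j ->
  vanishes_below (PS_mult a b) (i + j) /\ PS_mult a b (i + j) = a i * b j.
Proof.
  intros Ha Hb.
  assert (Hterm : forall n k, (k <= n)%nat -> (n < i + j \/ k <> i /\ n = i + j)%nat ->
            a k * b (n - k)%nat = 0).
  { intros n k Hkn Hnk; destruct (Nat.lt_ge_cases k i).
    - rewrite Ha; auto; ring.
    - rewrite Hb by lia; ring. }
  unfold PS_mult; split.
  - intros n Hn; apply sum_eq_R0; intros k Hk; apply Hterm; lia.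
  - rewrite (sum_f_R0_single _ _ i) by (try intros; try apply Hterm; lia).
    replace (i + j - i)%nat with j by lia; reflexivity.
Qed.

Definition PS_one (n : nat) : R := match n with O => 1 | S _ => 0 end.

Fixpoint PS_pow (a : nat -> R) (k : nat) : nat -> R :=
  match k with O => PS_one | S k => PS_mult a (PS_pow a k) end.

Lemma PS_pow_vanishes_below a i k : vanishes_below a i ->
  vanishes_below (PS_pow a k) (k * i) /\ PS_pow a k (k * i) = a i ^ k.
Proof.
  intro Ha; induction k as [|k [IH1 IH2]].
  - split; [intros n Hn; lia | reflexivity].
  - destruct (PS_mult_vanishes_below a (PS_pow a k) i (k * i) Ha IH1) as [H1 H2].
    simpl PS_pow; replace (S k * i)%nat with (i + k * i)%nat by lia.
    split; auto; rewrite H2, IH2; reflexivity.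
Qed.

Lemma is_series_PS_one x : is_series (fun k => PS_one k * x ^ k) 1.
Proof.
  apply is_series_Reals; intros eps He; exists 0%nat; intros n _.
  assert (Hsum : sum_f_R0 (fun k => PS_one k * x ^ k) n = 1)
    by (induction n; simpl in *; [ring | rewrite IHn; ring]).
  rewrite Hsum; unfold R_dist; rewrite Rminus_diag, Rabs_R0; lra.
Qed.

Lemma unit_radius_PS_pow a k : unit_radius a -> unit_radius (PS_pow a k).
Proof.
  intro Ha; induction k; simpl; [|apply unit_radius_mult; auto].
  apply unit_radius_intro; intros x _; apply ex_pseries_R; eexists; apply is_series_PS_one.
Qed.

Lemma PSeries_PS_pow a k x : unit_radius a -> Rabs x < 1 ->
  PSeries (PS_pow a k) x = PSeries a x ^ k.
Proof.
  intros Ha Hx; induction k; simpl.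
  - apply is_series_unique, is_series_PS_one.
  - rewrite PSeries_mult, IHk; auto; apply unit_radius_lt; auto.
    apply unit_radius_PS_pow; auto.
Qed.

Definition PS_theta (a : nat -> R) : nat -> R := PS_incr_1 (PS_derive a).

Lemma PS_theta_coef a n : PS_theta a n = INR n * a n.
Proof. destruct n; [symmetry; apply Rmult_0_l | reflexivity]. Qed.

Lemma unit_radius_theta a : unit_radius a -> unit_radius (PS_theta a).
Proof. unfold unit_radius, PS_theta; rewrite CV_radius_incr_1, CV_radius_derive; auto. Qed.

Lemma PSeries_theta a x : unit_radius a -> Rabs x < 1 ->
  PSeries (PS_theta a) x = x * Derive (PSeries a) x.
Proof.
  intros Ha Hx; unfold PS_theta; rewrite PSeries_incr_1; f_equal.
  symmetry; apply is_derive_unique, is_derive_PSeries, unit_radius_lt; auto.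
Qed.

Definition PS_wronskian (p q : nat -> R) : nat -> R :=
  PS_plus (PS_mult q (PS_theta p)) (PS_opp (PS_mult p (PS_theta q))).

Lemma unit_radius_wronskian p q : unit_radius p -> unit_radius q ->
  unit_radius (PS_wronskian p q).
Proof.
  intros; apply unit_radius_plus; [|apply unit_radius_opp];
    apply unit_radius_mult; auto; apply unit_radius_theta; auto.
Qed.

Lemma PSeries_wronskian p q x : unit_radius p -> unit_radius q -> Rabs x < 1 ->
  PSeries (PS_wronskian p q) x
  = PSeries q x * PSeries (PS_theta p) x - PSeries p x * PSeries (PS_theta q) x.
Proof.
  intros Hp Hq Hx.
  assert (Hin : forall a, unit_radius a -> Rbar_lt (Rabs x) (CV_radius a))
    by (intros; apply unit_radius_lt; auto).
  unfold PS_wronskian; rewrite PSeries_plus, PSeries_opp.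
  - rewrite !PSeries_mult by (apply Hin; auto; apply unit_radius_theta; auto); ring.
  - apply CV_radius_inside, Hin, unit_radius_mult; auto; apply unit_radius_theta; auto.
  - apply CV_radius_inside, Hin, unit_radius_opp, unit_radius_mult; auto.
    apply unit_radius_theta; auto.
Qed.

Lemma PS_wronskian_vanishes_below p q i m : vanishes_below p i -> vanishes_below q m ->
  vanishes_below (PS_wronskian p q) (m + i)
  /\ PS_wronskian p q (m + i) = p i * q m * (INR i - INR m).
Proof.
  intros Hp Hq.
  assert (Htp : vanishes_below (PS_theta p) i)
    by (intros n Hn; rewrite PS_theta_coef, Hp by auto; ring).
  assert (Htq : vanishes_below (PS_theta q) m)
    by (intros n Hn; rewrite PS_theta_coef, Hq by auto; ring).
  destruct (PS_mult_vanishes_below q (PS_theta p) m i Hq Htp) as [W1 W2].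
  destruct (PS_mult_vanishes_below p (PS_theta q) i m Hp Htq) as [W3 W4].
  unfold PS_wronskian, PS_plus, PS_opp, plus, opp; simpl; split.
  - intros n Hn; rewrite W1, W3 by lia; ring.
  - rewrite W2, Nat.add_comm, W4, !PS_theta_coef; ring.
Qed.

(* Compare lowest-order coefficients: the left side starts at (j+1)(m+i), or later
   when i = m, while the right side starts exactly at j i + (j+2) m. *)
Lemma PS_wronskian_pow_neq p q j c : c <> 0 ->
  (exists n, p n <> 0) -> (exists n, q n <> 0) ->
  ~ (forall n, PS_pow (PS_wronskian p q) (S j) n
               = c * PS_mult (PS_pow p j) (PS_pow q (j + 2)) n).
Proof.
  intros Hc [i0 Hi0] [m0 Hm0] Heq.
  destruct (exists_lowest_nonzero p i0 Hi0) as [i [Hpi Hi]].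
  destruct (exists_lowest_nonzero q m0 Hm0) as [m [Hqm Hm]].
  destruct (PS_pow_vanishes_below p i j Hi) as [P1 P2].
  destruct (PS_pow_vanishes_below q m (j + 2) Hm) as [Q1 Q2].
  destruct (PS_mult_vanishes_below _ _ _ _ P1 Q1) as [R1 R2].
  assert (HR : c * PS_mult (PS_pow p j) (PS_pow q (j + 2)) (j * i + (j + 2) * m) <> 0).
  { rewrite R2, P2, Q2.
    repeat apply Rmult_integral_contrapositive_currified; auto; apply pow_nonzero; auto. }
  destruct (PS_wronskian_vanishes_below p q i m Hi Hm) as [W1 W2].
  destruct (Compare_dec.lt_eq_lt_dec i m) as [[Him|Him]|Him].
  - assert (HW : PS_wronskian p q (m + i) <> 0).
    { rewrite W2; assert (INR i <> INR m) by (intro E; apply INR_eq in E; lia).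
      repeat apply Rmult_integral_contrapositive_currified; auto; lra. }
    destruct (PS_pow_vanishes_below _ _ (S j) W1) as [L1 L2].
    apply (pow_nonzero _ (S j) HW); rewrite <- L2, Heq, R1 by nia; ring.
  - subst m.
    assert (W3 : vanishes_below (PS_wronskian p q) (i + i + 1)).
    { intros n Hn; destruct (Nat.eq_dec n (i + i)) as [->|]; [|apply W1; lia].
      rewrite W2; ring. }
    destruct (PS_pow_vanishes_below _ _ (S j) W3) as [L1 _].
    apply HR; rewrite <- Heq, L1 by nia; reflexivity.
  - destruct (PS_pow_vanishes_below _ _ (S j) W1) as [L1 _].
    apply HR; rewrite <- Heq, L1 by nia; reflexivity.
Qed.

(** * A power of the logarithm is not a quotient of power series *)

Lemma neg_ln_pos x : 0 < x < 1 -> 0 < - ln x.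
Proof. intro Hx; assert (H : ln x < ln 1) by (apply ln_increasing; lra); rewrite ln_1 in H; lra. Qed.

Lemma is_derive_neg_ln_pow j x : 0 < x ->
  is_derive (fun y => (- ln y) ^ S j) x (INR (S j) * (- ln x) ^ j * (- / x)).
Proof. intro Hx; auto_derive; [lra | destruct j; simpl; field; lra]. Qed.

Lemma PSeries_theta_log_factor p q j x1 : unit_radius p -> unit_radius q -> 0 < x1 < 1 ->
  (forall x, x1 < x < 1 -> PSeries p x = (- ln x) ^ S j * PSeries q x) ->
  forall x, x1 < x < 1 ->
  PSeries (PS_theta p) x
  = - INR (S j) * (- ln x) ^ j * PSeries q x + (- ln x) ^ S j * PSeries (PS_theta q) x.
Proof.
  intros Hp Hq Hx1 Hpq x Hx.
  assert (Hxr : Rabs x < 1) by (rewrite Rabs_pos_eq; lra).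
  rewrite !PSeries_theta by auto.
  rewrite (Derive_ext_loc _ (fun y => (- ln y) ^ S j * PSeries q y)).
  2: { apply (locally_interval _ x x1 1); simpl; try lra.
       intros y Hy1 Hy2; apply Hpq; lra. }
  rewrite Derive_mult.
  - assert (Hd : Derive (fun y : R => (- ln y) ^ S j) x = INR (S j) * (- ln x) ^ j * (- / x))
      by (apply is_derive_unique, is_derive_neg_ln_pow; lra).
    rewrite Hd; field; lra.
  - eexists; apply is_derive_neg_ln_pow; lra.
  - eexists; apply is_derive_PSeries, unit_radius_lt; auto.
Qed.

(* Eliminating l between P = l^k Q and its Euler derivative gives Q TP - P TQ = -k l^(k-1) Q^2. *)
Lemma wronskian_log_identity j l P Q TP TQ : P = l ^ S j * Q ->
  TP = - INR (S j) * l ^ j * Q + l ^ S j * TQ ->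
  (Q * TP - P * TQ) ^ S j = (- INR (S j)) ^ S j * (P ^ j * Q ^ (j + 2)).
Proof.
  intros -> ->.
  replace (Q * (- INR (S j) * l ^ j * Q + l ^ S j * TQ) - l ^ S j * Q * TQ)
    with (- INR (S j) * l ^ j * Q ^ 2) by (simpl; ring).
  rewrite !Rpow_mult_distr, <- !pow_mult.
  replace (j * S j)%nat with (S j * j)%nat by lia.
  replace (2 * S j)%nat with (j + (j + 2))%nat by lia.
  rewrite pow_add; ring.
Qed.

Lemma PSeries_log_factor_coef_zero p q j x1 : unit_radius p -> unit_radius q -> 0 < x1 < 1 ->
  (forall x, x1 < x < 1 -> PSeries p x = (- ln x) ^ S j * PSeries q x) ->
  forall n, q n = 0.
Proof.
  intros Hp Hq Hx1 Hpq.
  destruct (classic (exists n, q n <> 0)) as [Hqnz|Hq0].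
  2: { intro n; apply NNPP; intro Hn; apply Hq0; eauto. }
  exfalso.
  destruct (classic (exists n, p n <> 0)) as [Hpnz|Hp0].
  - set (c := (- INR (S j)) ^ S j).
    assert (Hc : c <> 0).
    { apply pow_nonzero; assert (0 < INR (S j)) by (apply lt_0_INR; lia); lra. }
    apply (PS_wronskian_pow_neq p q j c Hc Hpnz Hqnz).
    apply (PSeries_coef_eq_near_1 _ (PS_scal c (PS_mult (PS_pow p j) (PS_pow q (j + 2)))) x1).
    + apply unit_radius_PS_pow, unit_radius_wronskian; auto.
    + apply unit_radius_scal, unit_radius_mult; apply unit_radius_PS_pow; auto.
    + lra.
    + intros x Hx.
      assert (Hxr : Rabs x < 1) by (rewrite Rabs_pos_eq; lra).
      assert (Hpj := unit_radius_PS_pow p j Hp).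
      assert (Hqj := unit_radius_PS_pow q (j + 2) Hq).
      rewrite PSeries_scal, PSeries_mult by (apply unit_radius_lt; auto).
      rewrite !PSeries_PS_pow, PSeries_wronskian by (auto; apply unit_radius_wronskian; auto).
      apply (wronskian_log_identity j (- ln x));
        [apply Hpq | apply (PSeries_theta_log_factor p q j x1)]; auto.
  - destruct Hqnz as [n Hn]; apply Hn.
    apply (PSeries_zero_near_1_coef q x1 Hq ltac:(lra)); intros x Hx.
    assert (HL : 0 < (- ln x) ^ S j) by (apply pow_lt, neg_ln_pos; lra).
    assert (Hzero : PSeries p x = 0).
    { rewrite (PSeries_ext p (fun _ => 0)), PSeries_const_0; auto.
      intro k; apply NNPP; intro Hk; apply Hp0; eauto. }
    rewrite Hpq in Hzero by auto.
    apply Rmult_integral in Hzero; destruct Hzero; auto; lra.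
Qed.

Lemma PSeries_log_power_coef_eq_le p p' nu d x1 :
  unit_radius p -> unit_radius p' -> 0 < x1 < 1 ->
  (forall x, x1 < x < 1 -> (- ln x) ^ nu * PSeries p x = (- ln x) ^ (nu + d) * PSeries p' x) ->
  forall n, p n = p' n.
Proof.
  intros Hp Hp' Hx1 Heq.
  assert (Hpd : forall x, x1 < x < 1 -> PSeries p x = (- ln x) ^ d * PSeries p' x).
  { intros x Hx; specialize (Heq x Hx); rewrite pow_add in Heq.
    assert (0 < (- ln x) ^ nu) by (apply pow_lt, neg_ln_pos; lra).
    apply Rmult_eq_reg_l with ((- ln x) ^ nu); [rewrite Heq; ring | lra]. }
  destruct d as [|j].
  - apply (PSeries_coef_eq_near_1 p p' x1); auto; [lra|].
    intros x Hx; rewrite Hpd by auto; ring.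
  - assert (Hq0 := PSeries_log_factor_coef_zero p p' j x1 Hp Hp' Hx1 Hpd).
    intro n; rewrite Hq0; apply (PSeries_zero_near_1_coef p x1); auto; [lra|].
    intros x Hx; rewrite Hpd, (PSeries_ext p' (fun _ => 0)), PSeries_const_0 by auto; ring.
Qed.

Lemma PSeries_log_power_coef_eq p p' nu nu' x1 :
  unit_radius p -> unit_radius p' -> 0 < x1 < 1 ->
  (forall x, x1 < x < 1 -> (- ln x) ^ nu * PSeries p x = (- ln x) ^ nu' * PSeries p' x) ->
  forall n, p n = p' n.
Proof.
  intros Hp Hp' Hx1 Heq n.
  destruct (Nat.le_ge_cases nu nu') as [h|h].
  - replace nu' with (nu + (nu' - nu))%nat in Heq by lia.
    apply (PSeries_log_power_coef_eq_le p p' nu (nu' - nu) x1); auto.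
  - replace nu with (nu' + (nu - nu'))%nat in Heq by lia.
    symmetry; apply (PSeries_log_power_coef_eq_le p' p nu' (nu - nu') x1); auto.
    intros; symmetry; auto.
Qed.

(** * From complex coefficients to real power series *)

Lemma Cx_eq (z w : Cx) : re z = re w -> im z = im w -> z = w.
Proof. destruct z, w; simpl; intros -> ->; reflexivity. Qed.

Lemma RtoC_mul x y : Cmul (RtoC x) (RtoC y) = RtoC (x * y).
Proof. apply Cx_eq; simpl; ring. Qed.

Lemma Cpow_RtoC x n : Cpow (RtoC x) n = RtoC (x ^ n).
Proof. induction n; simpl; [reflexivity | rewrite IHn, RtoC_mul; reflexivity]. Qed.

Lemma Copp_RtoC u : Copp (RtoC u) = RtoC (- u).
Proof. apply Cx_eq; simpl; ring. Qed.

Lemma Cexp_RtoC u : Cexp (RtoC u) = RtoC (exp u).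
Proof. apply Cx_eq; simpl; [rewrite cos_0 | rewrite sin_0]; ring. Qed.

Lemma Cnorm_RtoC u : Cnorm (RtoC u) = Rabs u.
Proof. unfold Cnorm; simpl; rewrite <- sqrt_Rsqr_abs; f_equal; unfold Rsqr; ring. Qed.

Lemma psum_S g n : psum g (S n) = Cadd (psum g n) (g n).
Proof. reflexivity. Qed.

Section RealOrImaginaryPart.

Variable f : Cx -> R.
Hypothesis Hf : f = re \/ f = im.

Lemma Rabs_proj_le z : Rabs (f z) <= Cnorm z.
Proof.
  unfold Cnorm; rewrite <- sqrt_Rsqr_abs; apply sqrt_le_1_alt; unfold Rsqr.
  destruct Hf as [-> | ->]; nra.
Qed.

Lemma proj_Cmul_RtoC z r : f (Cmul z (RtoC r)) = f z * r.
Proof. destruct Hf as [-> | ->]; simpl; ring. Qed.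

Lemma proj_RtoC_Cmul r z : f (Cmul (RtoC r) z) = r * f z.
Proof. destruct Hf as [-> | ->]; simpl; ring. Qed.

Lemma Cseq_cv_proj s l : Cseq_cv s l -> Un_cv (fun n => f (s n)) (f l).
Proof.
  intros Hs eps He; destruct (Hs eps He) as [N HN]; exists N; intros n Hn.
  unfold R_dist; eapply Rle_lt_trans; [|exact (HN n Hn)].
  replace (f (s n) - f l) with (f (Csub (s n) l))
    by (destruct Hf as [-> | ->]; simpl; ring).
  apply Rabs_proj_le.
Qed.

Lemma proj_Cadd z w : f (Cadd z w) = f z + f w.
Proof. destruct Hf as [-> | ->]; reflexivity. Qed.

Lemma proj_psum a x n :
  f (psum (fun k => Cmul (a k) (Cpow (RtoC x) k)) (S n)) = sum_f_R0 (fun k => f (a k) * x ^ k) n.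
Proof.
  induction n as [|n IH]; rewrite psum_S, proj_Cadd, Cpow_RtoC, proj_Cmul_RtoC.
  - replace (f (psum _ 0)) with 0 by (destruct Hf as [-> | ->]; reflexivity); simpl; ring.
  - rewrite IH; reflexivity.
Qed.

Lemma series_cv_proj a x L : series_cv (fun n => Cmul (a n) (Cpow (RtoC x) n)) L ->
  is_series (fun k => f (a k) * x ^ k) (f L).
Proof.
  intro H; apply is_series_Reals; intros eps He.
  destruct (Cseq_cv_proj _ _ H eps He) as [N HN]; exists N; intros n Hn.
  rewrite <- proj_psum; apply HN; lia.
Qed.

End RealOrImaginaryPart.

Lemma Cseq_cv_unique s l1 l2 : Cseq_cv s l1 -> Cseq_cv s l2 -> l1 = l2.
Proof.
  intros H1 H2; apply Cx_eq;
    [apply (UL_sequence (fun n => re (s n))) | apply (UL_sequence (fun n => im (s n)))];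
    apply Cseq_cv_proj; auto.
Qed.

Definition disk_sum (a : nat -> Cx) (F : Cx -> Cx) : Prop :=
  forall z, unit_disk z -> series_cv (fun n => Cmul (a n) (Cpow z n)) (F z).

Lemma disk_sum_proj f a F : f = re \/ f = im -> disk_sum a F ->
  unit_radius (fun k => f (a k))
  /\ forall x, 0 <= x < 1 -> PSeries (fun k => f (a k)) x = f (F (RtoC x)).
Proof.
  intros Hf HF.
  assert (Hs : forall x, 0 <= x < 1 -> is_series (fun k => f (a k) * x ^ k) (f (F (RtoC x)))).
  { intros x Hx; apply series_cv_proj; auto.
    apply HF; unfold unit_disk; rewrite Cnorm_RtoC, Rabs_pos_eq; lra. }
  split.
  - apply unit_radius_intro; intros x Hx; apply ex_pseries_R; eexists; apply Hs; auto.
  - intros x Hx; apply is_series_unique, Hs; auto.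
Qed.

Lemma bernoulli_real_axis a t b : bernoulli a t b ->
  exists F nu rho, rho > 0 /\ disk_sum a F /\
    forall u, - rho < u < 0 ->
      series_cv (fun n => Cmul (Cdiv (b n) (RtoC (INR (fact n)))) (Cpow (RtoC u) n))
        (Cmul (Cmul (RtoC ((- u) ^ nu)) (F (RtoC (exp u)))) (RtoC (exp (t * u)))).
Proof.
  intros (F & g & r & nu & (_ & Hdisk & _) & rho & Hrho & Hser).
  exists F, nu, rho; repeat split; auto.
  intros u Hu; generalize (Hser (RtoC u)).
  rewrite Copp_RtoC, Cpow_RtoC, Cexp_RtoC, RtoC_mul, Cexp_RtoC, Cnorm_RtoC.
  intro H; apply H.
  - intro E; injection E; lra.
  - rewrite Rabs_left; lra.
Qed.

Lemma Cmul_RtoC_reg_r z w r : r <> 0 -> Cmul z (RtoC r) = Cmul w (RtoC r) -> z = w.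
Proof.
  intros Hr E; apply Cx_eq;
    [apply (f_equal re) in E | apply (f_equal im) in E]; simpl in E;
    apply Rmult_eq_reg_r with r; auto; lra.
Qed.

(* Substitute x = e^u in the two Bernoulli generating functions. *)
Lemma bernoulli_log_relation a a' t b : bernoulli a t b -> bernoulli a' t b ->
  exists F F' nu nu' x1, disk_sum a F /\ disk_sum a' F' /\ 0 < x1 < 1 /\
    forall x, x1 < x < 1 ->
      Cmul (RtoC ((- ln x) ^ nu)) (F (RtoC x)) = Cmul (RtoC ((- ln x) ^ nu')) (F' (RtoC x)).
Proof.
  intros Hb Hb'.
  destruct (bernoulli_real_axis _ _ _ Hb) as (F & nu & rho & Hrho & HF & Hu).
  destruct (bernoulli_real_axis _ _ _ Hb') as (F' & nu' & rho' & Hrho' & HF' & Hu').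
  set (r := Rmin rho rho').
  assert (Hr : 0 < r) by (apply Rmin_glb_lt; lra).
  exists F, F', nu, nu', (exp (- r)); repeat split; auto.
  - apply exp_pos.
  - rewrite <- exp_0; apply exp_increasing; lra.
  - intros x Hx.
    assert (Hx0 : 0 < x) by (generalize (exp_pos (- r)); lra).
    assert (Hu0 : ln x < 0) by (rewrite <- ln_1; apply ln_increasing; lra).
    assert (Hur : - r < ln x)
      by (rewrite <- (ln_exp (- r)); apply ln_increasing; [apply exp_pos | lra]).
    assert (Hm := Rmin_l rho rho'); assert (Hm' := Rmin_r rho rho'); fold r in Hm, Hm'.
    assert (E := Cseq_cv_unique _ _ _ (Hu (ln x) ltac:(lra)) (Hu' (ln x) ltac:(lra))).
    rewrite exp_ln in E by lra.
    apply (Cmul_RtoC_reg_r _ _ (exp (t * ln x))); auto.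
    apply Rgt_not_eq, exp_pos.
Qed.

Lemma disk_sum_log_relation_coef_eq a a' F F' nu nu' x1 :
  disk_sum a F -> disk_sum a' F' -> 0 < x1 < 1 ->
  (forall x, x1 < x < 1 ->
     Cmul (RtoC ((- ln x) ^ nu)) (F (RtoC x)) = Cmul (RtoC ((- ln x) ^ nu')) (F' (RtoC x))) ->
  forall n, a n = a' n.
Proof.
  intros HF HF' Hx1 Hrel n.
  assert (Hproj : forall f, f = re \/ f = im -> f (a n) = f (a' n)).
  { intros f Hf.
    destruct (disk_sum_proj f a F Hf HF) as [Hr HP].
    destruct (disk_sum_proj f a' F' Hf HF') as [Hr' HP'].
    apply (PSeries_log_power_coef_eq (fun k => f (a k)) (fun k => f (a' k)) nu nu' x1);
      auto.
    intros x Hx; rewrite HP, HP' by lra.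
    rewrite <- !proj_RtoC_Cmul by auto; f_equal; auto. }
  apply Cx_eq; apply Hproj; auto.
Qed.

Theorem mainTheorem7 (t0 : R) (ht0 : t0 > 0) (a a' : nat -> Cx) :
  tame a -> tame a' ->
  forall b b' : nat -> Cx,
    bernoulli a t0 b -> bernoulli a' t0 b' ->
    (forall n : nat, b n = b' n) ->
    forall n : nat, a n = a' n.
Proof.
  intros _ _ b b' Hb Hb' Hbb.
  replace b' with b in Hb' by (apply functional_extensionality; auto).
  destruct (bernoulli_log_relation a a' t0 b Hb Hb')
    as (F & F' & nu & nu' & x1 & HF & HF' & Hx1 & Hrel).
  exact (disk_sum_log_relation_coef_eq a a' F F' nu nu' x1 HF HF' Hx1 Hrel).
Qed.
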